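(* Let $N\ge2$, $\beta>0$, real $\Delta_1,\dots,\Delta_4\in(0,2\pi)$ with $\sum_{I=1}^4\Delta_I=2\pi$, and integers $n_1,\dots,n_N,\tilde n_1,\dots,\tilde n_N$. Put $\bar n=\frac1N\sum_jn_j$, $\bar{\tilde n}=\frac1N\sum_j\tilde n_j$, $C=\Delta_3\Delta_4-\Delta_1\Delta_2$ and $$u_j=-\frac{i\beta}{N}(n_j-\bar n),\quad \tilde u_j=\frac{i\beta}{N}(\tilde n_j-\bar{\tilde n}),\quad v=\frac{iN}{\beta}C+2\pi\bar n,\quad \tilde v=-\frac{iN}{\beta}C-2\pi\bar{\tilde n}.$$ Define $E_{ij}=\sum_{a=1,2}F'(u_i-\tilde u_j+\Delta_a)-\sum_{b=3,4}F'(\tilde u_j-u_i+\Delta_b)$. Then $\sum_iu_i=\sum_i\tilde u_i=0$ and for all $i,j\in\{1,\dots,N\}$ $$0=-2\pi i n_i+iv+\frac1\beta\sum_{k=1}^NE_{ik},\qquad 0=-2\pi i\tilde n_j-i\tilde v+\frac1\beta\sum_{k=1}^NE_{kj}.$$ Moreover the function $$\mathcal V=2\pi\sum_{i=1}^N(n_iu_i-\tilde n_i\tilde u_i)-\sum_{i=1}^N(v\,u_i+\tilde v\,\tilde u_i)+\frac i\beta\sum_{i,j=1}^N\Big[\sum_{a=1,2}F(u_i-\tilde u_j+\Delta_a)+\sum_{b=3,4}F(\tilde u_j-u_i+\Delta_b)\Big]$$ evaluated at this configuration equals $\frac{iN^2}{\beta}\sum_{I=1}^4F(\Delta_I)+O(\beta)=\frac{iN^2}{2\beta}\sum_{a<b<c}\Delta_a\Delta_b\Delta_c+O(\beta)$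 as $\beta\to0^+$ with the integers fixed.
   Context: For complex $w$: $F(w)=\frac{w^3}{6}-\frac12\pi w^2\,\mathrm{sign}(\mathrm{Re}\,w)+\frac{\pi^2}{3}w$ and $F'(w)=\frac{w^2}{2}-\pi w\,\mathrm{sign}(\mathrm{Re}\,w)+\frac{\pi^2}{3}$. The sum $\sum_{a<b<c}$ runs over triples in $\{1,2,3,4\}$. The displayed equations are the high-temperature limit (torus modulus $\tau=i\beta/2\pi$) of the Bethe ansatz equations for the topologically twisted index of the Klebanov–Witten $\mathrm{SU}(N)\times\mathrm{SU}(N)$ conifold theory on $S^2\times T^2$, with bi-fundamentals $A_{1,2}$ (chemical potentials $\Delta_{1,2}$) and $B_{1,2}$ (chemical potentials $\Delta_{3,4}$), holonomies $u_i,\tilde u_j$ of the two gauge groups, Lagrange multipliers $v,\tilde v$ for the two $\mathrm{SU}(N)$ constraints, and $\mathcal V$ the Bethe potential. *)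

From Stdlib Require Import Reals ZArith List.
Open Scope R_scope.

Record Cx := mkC { Re : R; Im : R }.

Definition Cadd (z w : Cx) : Cx := mkC (Re z + Re w) (Im z + Im w).
Definition Copp (z : Cx) : Cx := mkC (- Re z) (- Im z).
Definition Csub (z w : Cx) : Cx := Cadd z (Copp w).
Definition Cmul (z w : Cx) : Cx :=
  mkC (Re z * Re w - Im z * Im w) (Re z * Im w + Im z * Re w).
Definition RtoC (r : R) : Cx := mkC r 0.
Definition Ci : Cx := mkC 0 1.
Definition C0 : Cx := mkC 0 0.
Definition Cmod (z : Cx) : R := sqrt (Re z ^ 2 + Im z ^ 2).

Fixpoint Csum (n : nat) (f : nat -> Cx) : Cx :=
  match n with O => C0 | S m => Cadd (Csum m f) (f m) end.
Fixpoint Rsum (n : nat) (f : nat -> R) : R :=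
  match n with O => 0 | S m => Rsum m f + f m end.

Definition Rsgn (x : R) : R :=
  if Rlt_dec 0 x then 1 else if Rlt_dec x 0 then -1 else 0.

Definition Fpot (w : Cx) : Cx :=
  Cadd (Csub (Cmul (RtoC (1/6)) (Cmul w (Cmul w w)))
             (Cmul (RtoC (1/2 * PI * Rsgn (Re w))) (Cmul w w)))
       (Cmul (RtoC (PI^2/3)) w).

Definition Fprime (w : Cx) : Cx :=
  Cadd (Csub (Cmul (RtoC (1/2)) (Cmul w w))
             (Cmul (RtoC (PI * Rsgn (Re w))) w))
       (RtoC (PI^2/3)).

Definition nbar (N : nat) (n : nat -> Z) : R := / INR N * Rsum N (fun j => IZR (n j)).

Definition uconf (N : nat) (beta : R) (n : nat -> Z) (j : nat) : Cx :=
  mkC 0 (- (beta / INR N) * (IZR (n j) - nbar N n)).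
Definition utconf (N : nat) (beta : R) (nt : nat -> Z) (j : nat) : Cx :=
  mkC 0 ((beta / INR N) * (IZR (nt j) - nbar N nt)).

Definition Cconst (d1 d2 d3 d4 : R) : R := d3 * d4 - d1 * d2.

Definition vconf (N : nat) (beta d1 d2 d3 d4 : R) (n : nat -> Z) : Cx :=
  mkC (2 * PI * nbar N n) (INR N / beta * Cconst d1 d2 d3 d4).
Definition vtconf (N : nat) (beta d1 d2 d3 d4 : R) (nt : nat -> Z) : Cx :=
  mkC (- (2 * PI * nbar N nt)) (- (INR N / beta * Cconst d1 d2 d3 d4)).

Definition Eij (d1 d2 d3 d4 : R) (ui utj : Cx) : Cx :=
  Csub (Cadd (Fprime (Cadd (Csub ui utj) (RtoC d1)))
             (Fprime (Cadd (Csub ui utj) (RtoC d2))))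
       (Cadd (Fprime (Cadd (Csub utj ui) (RtoC d3)))
             (Fprime (Cadd (Csub utj ui) (RtoC d4)))).

Definition Wij (d1 d2 d3 d4 : R) (ui utj : Cx) : Cx :=
  Cadd (Cadd (Fpot (Cadd (Csub ui utj) (RtoC d1)))
             (Fpot (Cadd (Csub ui utj) (RtoC d2))))
       (Cadd (Fpot (Cadd (Csub utj ui) (RtoC d3)))
             (Fpot (Cadd (Csub utj ui) (RtoC d4)))).

Definition Bethe (N : nat) (beta d1 d2 d3 d4 : R) (n nt : nat -> Z)
    (u ut : nat -> Cx) (v vt : Cx) : Cx :=
  Cadd (Csub
    (Cmul (RtoC (2 * PI))
          (Csum N (fun i => Csub (Cmul (RtoC (IZR (n i))) (u i))
                                 (Cmul (RtoC (IZR (nt i))) (ut i)))))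
    (Csum N (fun i => Cadd (Cmul v (u i)) (Cmul vt (ut i)))))
   (Cmul (Cmul Ci (RtoC (/ beta)))
         (Csum N (fun i => Csum N (fun j => Wij d1 d2 d3 d4 (u i) (ut j))))).

From Stdlib Require Import Reals ZArith List Lra Lia.
Open Scope R_scope.

(* The holonomies are purely imaginary, so every argument [u_i - ut_j + d_a] of
   [F] and [F'] has real part [d_a > 0]: the sign is [1] and [F], [F'] are
   polynomials there.  The holonomies are deviations from a mean, hence sum to
   zero, so every contribution linear in them cancels; together with
   [d1 + d2 + d3 + d4 = 2 PI] this solves the Bethe equations exactly and makes
   the Bethe potential equal to [i (N^2 (F d1 + F d2 + F d3 + F d4) / beta + B beta)]
   with [B] independent of [beta] (from the flux term and the quadratic term of
   [F]). *)

Lemma Cx_ext (z w : Cx) : Re z = Re w -> Im z = Im w -> z = w.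
Proof. destruct z, w; simpl; intros -> ->; reflexivity. Qed.

Lemma Cmod_imag (y : R) : Cmod (mkC 0 y) = Rabs y.
Proof.
  unfold Cmod; simpl. rewrite <- sqrt_Rsqr_abs. f_equal. unfold Rsqr; ring.
Qed.

Lemma Rsum_ext (N : nat) (f g : nat -> R) :
  (forall i, (i < N)%nat -> f i = g i) -> Rsum N f = Rsum N g.
Proof. induction N; simpl; intros H; auto. rewrite IHN, H; auto. Qed.

Lemma Rsum_add (N : nat) (f g : nat -> R) :
  Rsum N (fun i => f i + g i) = Rsum N f + Rsum N g.
Proof. induction N; simpl; [ring | rewrite IHN; ring]. Qed.

Lemma Rsum_mull (N : nat) (c : R) (f : nat -> R) :
  Rsum N (fun i => c * f i) = c * Rsum N f.
Proof. induction N; simpl; [ring | rewrite IHN; ring]. Qed.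

Lemma Rsum_const (N : nat) (c : R) : Rsum N (fun _ => c) = INR N * c.
Proof. induction N; cbn [Rsum]; [simpl; ring | rewrite IHN, S_INR; ring]. Qed.

Lemma Csum_Re (N : nat) (f : nat -> Cx) : Re (Csum N f) = Rsum N (fun i => Re (f i)).
Proof. induction N; simpl; auto. rewrite IHN; auto. Qed.

Lemma Csum_Im (N : nat) (f : nat -> Cx) : Im (Csum N f) = Rsum N (fun i => Im (f i)).
Proof. induction N; simpl; auto. rewrite IHN; auto. Qed.

Lemma Csum_ext (N : nat) (f g : nat -> Cx) :
  (forall i, (i < N)%nat -> f i = g i) -> Csum N f = Csum N g.
Proof. induction N; simpl; intros H; auto. rewrite IHN, H; auto. Qed.

Lemma Csum_add (N : nat) (f g : nat -> Cx) :
  Csum N (fun i => Cadd (f i) (g i)) = Cadd (Csum N f) (Csum N g).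
Proof.
  apply Cx_ext; simpl; rewrite ?Csum_Re, ?Csum_Im; apply Rsum_add.
Qed.

Lemma Csum_mull (N : nat) (c : Cx) (f : nat -> Cx) :
  Csum N (fun i => Cmul c (f i)) = Cmul c (Csum N f).
Proof.
  apply Cx_ext; simpl; rewrite ?Csum_Re, ?Csum_Im.
  - rewrite (Rsum_ext N (fun i => Re (Cmul c (f i)))
                      (fun i => Re c * Re (f i) + (- Im c) * Im (f i)))
      by (intros; simpl; ring).
    rewrite Rsum_add, !Rsum_mull; ring.
  - rewrite (Rsum_ext N (fun i => Im (Cmul c (f i)))
                      (fun i => Re c * Im (f i) + Im c * Re (f i)))
      by (intros; simpl; ring).
    rewrite Rsum_add, !Rsum_mull; ring.
Qed.

Lemma Rsgn_pos (x : R) : 0 < x -> Rsgn x = 1.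
Proof. intro H; unfold Rsgn; destruct (Rlt_dec 0 x); [reflexivity | lra]. Qed.

Definition Fpos (d : R) : R := d ^ 3 / 6 - PI / 2 * d ^ 2 + PI ^ 2 / 3 * d.

Lemma Fpot_RtoC_pos (d : R) : 0 < d -> Fpot (RtoC d) = RtoC (Fpos d).
Proof.
  intros; unfold Fpot, Fpos, Csub, Cadd, Copp, Cmul, RtoC; simpl.
  rewrite Rsgn_pos by lra. f_equal; field.
Qed.

Section Chemical_potentials.
Variables d1 d2 d3 d4 : R.
Hypotheses (hd1 : 0 < d1) (hd2 : 0 < d2) (hd3 : 0 < d3) (hd4 : 0 < d4)
  (hsum : d1 + d2 + d3 + d4 = 2 * PI).

Lemma Eij_imag (a b : R) :
  Eij d1 d2 d3 d4 (mkC 0 a) (mkC 0 b) = mkC (Cconst d1 d2 d3 d4) (- 2 * PI * (a - b)).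
Proof.
  unfold Eij, Fprime, Csub, Cadd, Copp, Cmul, RtoC, Cconst; simpl.
  rewrite !Rsgn_pos by lra.
  replace d4 with (2 * PI - d1 - d2 - d3) by lra. f_equal; field.
Qed.

Lemma Wij_imag (a b : R) :
  Wij d1 d2 d3 d4 (mkC 0 a) (mkC 0 b) =
  mkC (Fpos d1 + Fpos d2 + Fpos d3 + Fpos d4 + PI * (a - b) ^ 2)
      (Cconst d1 d2 d3 d4 * (a - b)).
Proof.
  unfold Wij, Fpot, Fpos, Csub, Cadd, Copp, Cmul, RtoC, Cconst; simpl.
  rewrite !Rsgn_pos by lra.
  replace d4 with (2 * PI - d1 - d2 - d3) by lra. f_equal; field.
Qed.

Lemma Fpos_sum :
  Fpos d1 + Fpos d2 + Fpos d3 + Fpos d4 =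
  (d1 * d2 * d3 + d1 * d2 * d4 + d1 * d3 * d4 + d2 * d3 * d4) / 2.
Proof.
  unfold Fpos. replace d4 with (2 * PI - d1 - d2 - d3) by lra. field.
Qed.

End Chemical_potentials.

Definition dev (N : nat) (m : nat -> Z) (j : nat) : R := IZR (m j) - nbar N m.

Lemma Rsum_dev (N : nat) (m : nat -> Z) : (0 < N)%nat -> Rsum N (dev N m) = 0.
Proof.
  intros HN. unfold dev.
  rewrite (Rsum_ext N _ (fun j => IZR (m j) + (-1) * nbar N m)) by (intros; ring).
  rewrite Rsum_add, Rsum_const. unfold nbar.
  assert (INR N <> 0) by (apply not_0_INR; lia). field; auto.
Qed.

Lemma Rsum_add_dev (N : nat) (m : nat -> Z) (a c : R) : (0 < N)%nat ->
  Rsum N (fun k => a + c * dev N m k) = INR N * a.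
Proof.
  intros HN. rewrite Rsum_add, Rsum_mull, Rsum_dev, Rsum_const by exact HN. ring.
Qed.

Section Configuration.
Variables (N : nat) (n nt : nat -> Z) (d1 d2 d3 d4 beta : R).
Hypotheses (HN : (0 < N)%nat) (hbeta : 0 < beta)
  (hd1 : 0 < d1) (hd2 : 0 < d2) (hd3 : 0 < d3) (hd4 : 0 < d4)
  (hsum : d1 + d2 + d3 + d4 = 2 * PI).

Let HN0 : INR N <> 0.
Proof. apply not_0_INR; lia. Qed.

Let hbeta0 : beta <> 0.
Proof. lra. Qed.

Let u := uconf N beta n.
Let ut := utconf N beta nt.

Lemma Csum_uconf : Csum N u = C0.
Proof.
  apply Cx_ext; rewrite ?Csum_Re, ?Csum_Im; simpl.
  - rewrite Rsum_const; ring.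
  - rewrite (Rsum_mull N _ (dev N n)), Rsum_dev; auto; ring.
Qed.

Lemma Csum_utconf : Csum N ut = C0.
Proof.
  apply Cx_ext; rewrite ?Csum_Re, ?Csum_Im; simpl.
  - rewrite Rsum_const; ring.
  - rewrite (Rsum_mull N _ (dev N nt)), Rsum_dev; auto; ring.
Qed.

Lemma Csum_Eij_row (i : nat) :
  Csum N (fun k => Eij d1 d2 d3 d4 (u i) (ut k)) =
  mkC (INR N * Cconst d1 d2 d3 d4) (2 * PI * beta * dev N n i).
Proof.
  rewrite (Csum_ext N _ (fun k => mkC (Cconst d1 d2 d3 d4)
      (2 * PI * (beta / INR N) * dev N n i + 2 * PI * (beta / INR N) * dev N nt k)))
    by (intros; unfold u, ut, uconf, utconf; rewrite Eij_imag by auto;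
        f_equal; unfold dev; ring).
  apply Cx_ext; rewrite ?Csum_Re, ?Csum_Im; simpl.
  - apply Rsum_const.
  - rewrite Rsum_add_dev by exact HN. field; auto.
Qed.

Lemma Csum_Eij_column (j : nat) :
  Csum N (fun k => Eij d1 d2 d3 d4 (u k) (ut j)) =
  mkC (INR N * Cconst d1 d2 d3 d4) (2 * PI * beta * dev N nt j).
Proof.
  rewrite (Csum_ext N _ (fun k => mkC (Cconst d1 d2 d3 d4)
      (2 * PI * (beta / INR N) * dev N nt j + 2 * PI * (beta / INR N) * dev N n k)))
    by (intros; unfold u, ut, uconf, utconf; rewrite Eij_imag by auto;
        f_equal; unfold dev; ring).
  apply Cx_ext; rewrite ?Csum_Re, ?Csum_Im; simpl.
  - apply Rsum_const.
  - rewrite Rsum_add_dev by exact HN. field; auto.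
Qed.

Lemma bethe_equation_u (i : nat) :
  Cadd (Cadd (Cmul (Cmul (RtoC (- (2 * PI))) Ci) (RtoC (IZR (n i))))
             (Cmul Ci (vconf N beta d1 d2 d3 d4 n)))
       (Cmul (RtoC (/ beta)) (Csum N (fun k => Eij d1 d2 d3 d4 (u i) (ut k)))) = C0.
Proof.
  rewrite Csum_Eij_row. unfold vconf, dev.
  apply Cx_ext; simpl; field; auto.
Qed.

Lemma bethe_equation_ut (j : nat) :
  Cadd (Csub (Cmul (Cmul (RtoC (- (2 * PI))) Ci) (RtoC (IZR (nt j))))
             (Cmul Ci (vtconf N beta d1 d2 d3 d4 nt)))
       (Cmul (RtoC (/ beta)) (Csum N (fun k => Eij d1 d2 d3 d4 (u k) (ut j)))) = C0.
Proof.
  rewrite Csum_Eij_column. unfold vtconf, dev.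
  apply Cx_ext; simpl; field; auto.
Qed.

Lemma Csum_flux :
  Csum N (fun i => Csub (Cmul (RtoC (IZR (n i))) (u i)) (Cmul (RtoC (IZR (nt i))) (ut i))) =
  mkC 0 (- (beta / INR N) * Rsum N (fun i => IZR (n i) * dev N n i + IZR (nt i) * dev N nt i)).
Proof.
  apply Cx_ext; rewrite ?Csum_Re, ?Csum_Im; simpl.
  - rewrite (Rsum_ext N _ (fun _ => 0)) by (intros; ring). rewrite Rsum_const; ring.
  - rewrite <- Rsum_mull; apply Rsum_ext; intros; unfold dev; ring.
Qed.

Lemma Csum_multiplier (v vt : Cx) :
  Csum N (fun i => Cadd (Cmul v (u i)) (Cmul vt (ut i))) = C0.
Proof.
  rewrite Csum_add, !Csum_mull, Csum_uconf, Csum_utconf.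
  apply Cx_ext; simpl; ring.
Qed.

Lemma Csum_Wij :
  Csum N (fun i => Csum N (fun j => Wij d1 d2 d3 d4 (u i) (ut j))) =
  mkC (INR N ^ 2 * (Fpos d1 + Fpos d2 + Fpos d3 + Fpos d4)
       + beta ^ 2 / INR N ^ 2 *
         Rsum N (fun i => Rsum N (fun j => PI * (dev N n i + dev N nt j) ^ 2))) 0.
Proof.
  set (c := - (beta / INR N) * Cconst d1 d2 d3 d4).
  rewrite (Csum_ext N _ (fun i => Csum N (fun j =>
      mkC (Fpos d1 + Fpos d2 + Fpos d3 + Fpos d4
           + beta ^ 2 / INR N ^ 2 * (PI * (dev N n i + dev N nt j) ^ 2))
          (c * dev N n i + c * dev N nt j)))).
  2: { intros i _; apply Csum_ext; intros j _.
       unfold u, ut, uconf, utconf; rewrite Wij_imag by auto.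
       unfold c, dev; f_equal; field; auto. }
  apply Cx_ext; rewrite ?Csum_Re, ?Csum_Im; cbn [Re Im].
  - rewrite (Rsum_ext N _ (fun i => INR N * (Fpos d1 + Fpos d2 + Fpos d3 + Fpos d4)
        + beta ^ 2 / INR N ^ 2 * Rsum N (fun j => PI * (dev N n i + dev N nt j) ^ 2))).
    + rewrite Rsum_add, Rsum_const, Rsum_mull; ring.
    + intros i _; rewrite Csum_Re; cbn [Re Im].
      rewrite Rsum_add, Rsum_const, Rsum_mull; ring.
  - rewrite (Rsum_ext N _ (fun i => 0 + INR N * c * dev N n i)).
    + rewrite Rsum_add_dev by exact HN; ring.
    + intros i _; rewrite Csum_Im; cbn [Re Im].
      rewrite Rsum_add_dev by exact HN; ring.
Qed.

Definition bethe_correction : R :=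
  - 2 * PI / INR N * Rsum N (fun i => IZR (n i) * dev N n i + IZR (nt i) * dev N nt i)
  + / INR N ^ 2 * Rsum N (fun i => Rsum N (fun j => PI * (dev N n i + dev N nt j) ^ 2)).

Lemma Bethe_conf :
  Bethe N beta d1 d2 d3 d4 n nt u ut
        (vconf N beta d1 d2 d3 d4 n) (vtconf N beta d1 d2 d3 d4 nt) =
  mkC 0 (INR N ^ 2 * (Fpos d1 + Fpos d2 + Fpos d3 + Fpos d4) / beta
         + bethe_correction * beta).
Proof.
  unfold Bethe. rewrite Csum_flux, Csum_multiplier, Csum_Wij.
  unfold bethe_correction. apply Cx_ext; simpl; field; auto.
Qed.

End Configuration.

Theorem mainTheorem7 (N : nat) (HN : (2 <= N)%nat)
  (d1 d2 d3 d4 : R)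
  (h1 : 0 < d1 < 2 * PI) (h2 : 0 < d2 < 2 * PI)
  (h3 : 0 < d3 < 2 * PI) (h4 : 0 < d4 < 2 * PI)
  (hsum : d1 + d2 + d3 + d4 = 2 * PI)
  (n nt : nat -> Z) :
  (forall beta : R, 0 < beta ->
     let u := uconf N beta n in
     let ut := utconf N beta nt in
     let v := vconf N beta d1 d2 d3 d4 n in
     let vt := vtconf N beta d1 d2 d3 d4 nt in
     Csum N u = C0 /\ Csum N ut = C0 /\
     (forall i j : nat, (i < N)%nat -> (j < N)%nat ->
        Cadd (Cadd (Cmul (Cmul (RtoC (- (2 * PI))) Ci) (RtoC (IZR (n i))))
                   (Cmul Ci v))
             (Cmul (RtoC (/ beta))
                   (Csum N (fun k => Eij d1 d2 d3 d4 (u i) (ut k)))) = C0 /\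
        Cadd (Csub (Cmul (Cmul (RtoC (- (2 * PI))) Ci) (RtoC (IZR (nt j))))
                   (Cmul Ci vt))
             (Cmul (RtoC (/ beta))
                   (Csum N (fun k => Eij d1 d2 d3 d4 (u k) (ut j)))) = C0)) /\
  (exists K delta : R, 0 < delta /\
     forall beta : R, 0 < beta < delta ->
       let V := Bethe N beta d1 d2 d3 d4 n nt
                  (uconf N beta n) (utconf N beta nt)
                  (vconf N beta d1 d2 d3 d4 n) (vtconf N beta d1 d2 d3 d4 nt) in
       Cmod (Csub V (Cmul (mkC 0 (INR N ^ 2 / beta))
                (Cadd (Cadd (Fpot (RtoC d1)) (Fpot (RtoC d2)))
                      (Cadd (Fpot (RtoC d3)) (Fpot (RtoC d4)))))) <= K * beta /\
       Cmod (Csub V (mkC 0 (INR N ^ 2 / (2 * beta) *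
                (d1 * d2 * d3 + d1 * d2 * d4 + d1 * d3 * d4 + d2 * d3 * d4))))
         <= K * beta).
Proof.
  assert (HN0 : (0 < N)%nat) by lia.
  destruct h1, h2, h3, h4.
  split.
  - intros beta hbeta; cbv zeta.
    split; [|split]; [apply Csum_uconf | apply Csum_utconf |]; auto.
    intros i j _ _; split; [apply bethe_equation_u | apply bethe_equation_ut]; auto.
  - set (B := bethe_correction N n nt).
    exists (Rabs B), 1; split; [lra|]; intros beta [hbeta _]; cbv zeta.
    assert (err_bound : forall z, z = mkC 0 (B * beta) -> Cmod z <= Rabs B * beta).
    { intros z ->. rewrite Cmod_imag, Rabs_mult, (Rabs_right beta) by lra. lra. }
    rewrite Bethe_conf, !Fpot_RtoC_pos by auto.
    split; apply err_bound, Cx_ext; cbn [Re Im Csub Cadd Copp Cmul RtoC];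
      rewrite <- ?Rplus_assoc, ?Fpos_sum by auto; unfold B; field; lra.
Qed.
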